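(* Let $U$ be an infinite uniquely $2$-divisible group, $\nu$ an involutory almost regular automorphism of $U$, and $S=\{x\in U\mid x^\nu=x^{-1}\}$. Let $D$ be an abelian subgroup of $U$ (possibly $D=1$) which is inverted by $\nu$ and such that $C_U(D)$ is infinite, and assume $(S\cap C_U(D))\setminus D\neq\emptyset$. Then: (1) there exists an element $w\in C_U(D)\setminus D$ which is inverted by $\nu$ and such that $C_U(\langle D,w\rangle)$ is infinite; (2) there exists an infinite abelian subgroup of $U$ which is inverted by $\nu$.
   Context: An automorphism $\nu$ is involutory if $\nu\ne\mathrm{id}$ and $\nu^2=\mathrm{id}$, and almost regular if $C_U(\nu)$ is finite. A group is uniquely $2$-divisible if every element has a unique square root. A subgroup is inverted by $\nu$ if each of its elements $x$ satisfies $x^\nu=x^{-1}$. *)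

From Stdlib Require Import List.

Record Group := {
  carrier :> Type;
  mul : carrier -> carrier -> carrier;
  inv : carrier -> carrier;
  one : carrier;
  mulA : forall x y z, mul x (mul y z) = mul (mul x y) z;
  mul1g : forall x, mul one x = x;
  mulg1 : forall x, mul x one = x;
  mulVg : forall x, mul (inv x) x = one;
  mulgV : forall x, mul x (inv x) = one
}.

Section Defs.
Variable U : Group.

Definition finite_set (A : U -> Prop) : Prop :=
  exists l : list U, forall x, A x -> In x l.
Definition infinite_set (A : U -> Prop) : Prop := ~ finite_set A.

Definition infinite_group : Prop := infinite_set (fun _ => True).

Definition is_subgroup (H : U -> Prop) : Prop :=
  H (one U) /\ (forall x y, H x -> H y -> H (mul U x y)) /\
  (forall x, H x -> H (inv U x)).

Definition is_abelian (H : U -> Prop) : Prop :=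
  forall x y, H x -> H y -> mul U x y = mul U y x.

Definition uniquely_2_divisible : Prop :=
  forall x : U, exists y, mul U y y = x /\ forall z, mul U z z = x -> z = y.

Definition is_automorphism (nu : U -> U) : Prop :=
  (forall x y, nu (mul U x y) = mul U (nu x) (nu y)) /\
  (forall x y, nu x = nu y -> x = y) /\
  (forall y, exists x, nu x = y).

Definition involutory (nu : U -> U) : Prop :=
  (exists x, nu x <> x) /\ (forall x, nu (nu x) = x).

Definition fixed_points (nu : U -> U) : U -> Prop := fun x => nu x = x.

Definition almost_regular (nu : U -> U) : Prop := finite_set (fixed_points nu).

Definition centralizer (A : U -> Prop) : U -> Prop :=
  fun x => forall a, A a -> mul U x a = mul U a x.

Definition generated (A : U -> Prop) : U -> Prop :=
  fun x => forall H, is_subgroup H -> (forall a, A a -> H a) -> H x.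

Definition inverted_by (nu : U -> U) (H : U -> Prop) : Prop :=
  forall x, H x -> nu x = inv U x.

End Defs.

(* If D is infinite, any inverted w in C_U(D) \ D works, as D centralizes <D, w>.
   For finite D, call a subgroup H of C_U(D) admissible if it is infinite,
   nu-stable and closed under square roots.  Each y in H is y = c u with c fixed
   and u inverted by nu, so H contains infinitely many inverted elements.  If
   Z(H) is infinite, any inverted w in H \ D works.  Otherwise take g in H outside
   C_U(nu) Z(H); pigeonholing over the finitely many fixed points c yields a
   conjugate h of g^-1 c commuting with infinitely many inverted t in H, hence so
   does the inverted element e = nu(h)^-1 h.  If e is not in D, w = e works;
   otherwise e and its square root z are central in H, f = h z^-1 is fixed by nu,
   commutes with all those t, and does not centralize H (else g would lie in
   C_U(nu) Z(H)).  Passing to C_H(f) strictly shrinks the finite set of fixed points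
   not centralizing H, so the descent ends with some w.
   Part (2): adjoining such elements w repeatedly to the trivial subgroup gives a
   strictly increasing chain of abelian subgroups inverted by nu; if all of them
   were finite, their union would be the required infinite one. *)

From Stdlib Require Import PeanoNat List Classical ClassicalEpsilon Lia FinFun.

Notation "x ** y" := (mul _ x y) (at level 40, left associativity).
Notation "x ^-1" := (inv _ x) (at level 3, format "x ^-1").
Notation "1" := (one _).

Definition commute (U : Group) (x y : U) : Prop := x ** y = y ** x.
Arguments commute {U}.

Section GroupFacts.
Variable U : Group.
Implicit Types x y z r : U.

Lemma mulKg x y : x^-1 ** (x ** y) = y.
Proof. now rewrite mulA, mulVg, mul1g. Qed.

Lemma mulKVg x y : x ** (x^-1 ** y) = y.
Proof. now rewrite mulA, mulgV, mul1g. Qed.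

Lemma mulgK x y : y ** x ** x^-1 = y.
Proof. now rewrite <- mulA, mulgV, mulg1. Qed.

Lemma mulgKV x y : y ** x^-1 ** x = y.
Proof. now rewrite <- mulA, mulVg, mulg1. Qed.

Lemma mulg_injl x y z : x ** y = x ** z -> y = z.
Proof. intro E. now rewrite <- (mulKg x y), E, mulKg. Qed.

Lemma mulg_injr x y z : y ** x = z ** x -> y = z.
Proof. intro E. now rewrite <- (mulgK x y), E, mulgK. Qed.

Lemma invg_unique x y : x ** y = 1 -> y = x^-1.
Proof. intro E. apply (mulg_injl x). now rewrite E, mulgV. Qed.

Lemma invgK x : x^-1^-1 = x.
Proof. symmetry. apply invg_unique, mulVg. Qed.

Lemma invMg x y : (x ** y)^-1 = y^-1 ** x^-1.
Proof.
  symmetry. apply invg_unique.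
  now rewrite mulA, <- (mulA _ x), mulgV, mulg1, mulgV.
Qed.

Lemma invg1 : (one U)^-1 = one U.
Proof. symmetry. apply invg_unique, mul1g. Qed.

Lemma commute_sym x y : commute x y -> commute y x.
Proof. unfold commute. auto. Qed.

Lemma commute_subgroup x : is_subgroup U (commute x).
Proof.
  unfold commute. split; [|split].
  - now rewrite mulg1, mul1g.
  - intros a b Ea Eb. now rewrite mulA, Ea, <- mulA, Eb, mulA.
  - intros a Ea. transitivity (a^-1 ** (a ** x) ** a^-1); [now rewrite mulKg|].
    now rewrite <- Ea, mulA, mulgK.
Qed.

Lemma commuteM x y z : commute x y -> commute x z -> commute x (y ** z).
Proof. apply commute_subgroup. Qed.

Lemma commuteV x y : commute x y -> commute x y^-1.
Proof. apply commute_subgroup. Qed.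

Lemma sqrt_unique x y : uniquely_2_divisible U -> x ** x = y ** y -> x = y.
Proof.
  intros U2 E. destruct (U2 (x ** x)) as [s [_ Hs]].
  now rewrite (Hs x eq_refl), (Hs y (eq_sym E)).
Qed.

End GroupFacts.

Ltac gnorm := repeat progress rewrite ?invMg, ?invgK, ?invg1, ?mulA, ?mulgV,
  ?mulVg, ?mulg1, ?mul1g, ?mulgK, ?mulgKV.

Section Conjugation.
Variable U : Group.
Implicit Types x y r : U.

Lemma commute_conj r x y :
  commute (r^-1 ** x ** r) (r^-1 ** y ** r) <-> commute x y.
Proof.
  unfold commute. split; intro E.
  - apply (mulg_injl _ (r^-1)), (mulg_injr _ r). revert E. now gnorm.
  - gnorm. now rewrite <- (mulA _ (r^-1)), E, mulA.
Qed.

(* [x^-1 r x] is another square root of [r ** r]. *)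
Lemma commute_sqrt x r : uniquely_2_divisible U ->
  commute x (r ** r) -> commute x r.
Proof.
  unfold commute. intros U2 E.
  assert (Er : x^-1 ** r ** x = r).
  { apply (sqrt_unique _ _ _ U2).
    replace (x^-1 ** r ** x ** (x^-1 ** r ** x)) with (x^-1 ** (r ** r) ** x)
      by now gnorm.
    now rewrite <- (mulA _ (x^-1)), <- E, mulKg. }
  rewrite <- Er at 1. now gnorm.
Qed.

End Conjugation.

Section FiniteSets.
Variable U : Group.
Implicit Types A B : U -> Prop.

Definition prodset A B : U -> Prop := fun y => exists a b, A a /\ B b /\ y = a ** b.

Lemma finite_subset A B : (forall x, A x -> B x) -> finite_set U B -> finite_set U A.
Proof. intros AB [l Hl]. exists l. auto. Qed.

Lemma infinite_superset A B : infinite_set U A -> (forall x, A x -> B x) -> infinite_set U B.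
Proof. intros Ainf AB Bfin. exact (Ainf (finite_subset A B AB Bfin)). Qed.

Lemma infinite_minus_finite A B :
  infinite_set U A -> finite_set U B -> exists x, A x /\ ~ B x.
Proof.
  intros Ainf Bfin. apply NNPP. intro N. apply Ainf, (finite_subset A B); [|exact Bfin].
  intros x Ax. apply NNPP. intro Bx. apply N. now exists x.
Qed.

Lemma infinite_inhabited A : infinite_set U A -> exists x, A x.
Proof.
  intro Ainf. destruct (infinite_minus_finite A (fun _ => False)) as [x [Ax _]];
    [exact Ainf | now exists nil | now exists x].
Qed.

Lemma finite_prodset A B : finite_set U A -> finite_set U B -> finite_set U (prodset A B).
Proof.
  intros [la Ha] [lb Hb]. exists (flat_map (fun a => map (mul U a) lb) la).
  intros y (a & b & Aa & Bb & ->). apply in_flat_map. exists a.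
  split; [now apply Ha|]. apply in_map. now apply Hb.
Qed.

Lemma infinite_image A B (f g : U -> U) : infinite_set U A ->
  (forall x, A x -> B (f x)) -> (forall x, g (f x) = x) -> infinite_set U B.
Proof.
  intros Ainf ABf fK [l Hl]. apply Ainf. exists (map g l). intros x Ax.
  rewrite <- (fK x). apply in_map. auto.
Qed.

Lemma infinite_pigeonhole (l : list U) (P : U -> U -> Prop) A : infinite_set U A ->
  (forall x, A x -> exists c, In c l /\ P c x) ->
  exists c, In c l /\ infinite_set U (fun x => A x /\ P c x).
Proof.
  revert A. induction l as [|a l IH]; intros A Ainf HP.
  - exfalso. apply Ainf. exists nil. intros x Ax. now destruct (HP x Ax) as [c [[] _]].
  - destruct (classic (infinite_set U (fun x => A x /\ P a x))) as [Hinf|Hfin].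
    { exists a. split; [now left | exact Hinf]. }
    apply NNPP in Hfin. destruct Hfin as [la Hla].
    destruct (IH (fun x => A x /\ ~ In x la)) as [c [Hc Hinf]].
    + intros [l' Hl']. apply Ainf. exists (la ++ l'). intros x Ax.
      apply in_or_app. destruct (classic (In x la)); auto.
    + intros x [Ax Nx]. destruct (HP x Ax) as [c [[<- | Hc] Pc]]; [now exfalso; auto | eauto].
    + exists c. split; [now right|]. apply (infinite_superset _ _ Hinf). tauto.
Qed.

Lemma chain_mono (A : nat -> U -> Prop) : (forall n y, A n y -> A (S n) y) ->
  forall n m y, n <= m -> A n y -> A m y.
Proof. intros AS n m y nm. induction nm; auto. Qed.

Lemma strictly_increasing_union_infinite (A : nat -> U -> Prop) (w : nat -> U) :
  (forall n y, A n y -> A (S n) y) -> (forall n, A (S n) (w n) /\ ~ A n (w n)) ->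
  infinite_set U (fun y => exists n, A n y).
Proof.
  intros AS Aw [l Hl].
  assert (w_inj : Injective w).
  { intros i j E. destruct (Nat.lt_trichotomy i j) as [ij | [ij | ij]]; auto; exfalso.
    - apply (proj2 (Aw j)). rewrite <- E. apply (chain_mono A AS (S i)); [lia | apply Aw].
    - apply (proj2 (Aw i)). rewrite E. apply (chain_mono A AS (S j)); [lia | apply Aw]. }
  assert (Hlen : length (map w (seq 0 (S (length l)))) <= length l).
  { apply NoDup_incl_length; [apply Injective_map_NoDup; [exact w_inj | apply seq_NoDup]|].
    intros y Hy. apply in_map_iff in Hy. destruct Hy as [k [<- _]].
    apply Hl. exists (S k). apply Aw. }
  rewrite length_map, length_seq in Hlen. lia.
Qed.

End FiniteSets.

Section Generation.
Variable U : Group.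
Implicit Types A B : U -> Prop.

Definition center_of (H : U -> Prop) : U -> Prop :=
  fun z => H z /\ forall y, H y -> commute z y.

Lemma generated_incl A a : A a -> generated U A a.
Proof. intros Aa H _ AH. auto. Qed.

Lemma generated_min A H x : is_subgroup U H -> (forall a, A a -> H a) ->
  generated U A x -> H x.
Proof. intros HH AH Gx. now apply Gx. Qed.

Lemma generated_subgroup A : is_subgroup U (generated U A).
Proof.
  split; [|split].
  - intros H [H1 _] _. exact H1.
  - intros x y Gx Gy H HH AH. apply HH; [apply Gx | apply Gy]; auto.
  - intros x Gx H HH AH. apply HH. now apply Gx.
Qed.

Lemma centralizer_subgroup A : is_subgroup U (centralizer U A).
Proof.
  split; [|split].
  - intros a _. now rewrite mul1g, mulg1.
  - intros x y Cx Cy a Aa.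
    apply commute_sym, commuteM; apply commute_sym; [apply Cx | apply Cy]; exact Aa.
  - intros x Cx a Aa. apply commute_sym, commuteV, commute_sym, Cx, Aa.
Qed.

Lemma centralizer_generated A y : (forall a, A a -> commute y a) ->
  centralizer U (generated U A) y.
Proof. intros Ay z Gz. exact (generated_min A _ z (commute_subgroup U y) Ay Gz). Qed.

Lemma generated_abelian A : (forall a b, A a -> A b -> commute a b) ->
  is_abelian U (generated U A).
Proof.
  intros AA x y Gx Gy.
  apply (centralizer_generated A x); [|exact Gy].
  intros a Aa. apply commute_sym, (centralizer_generated A a); [|exact Gx]. auto.
Qed.

End Generation.

Section Involution.
Variables (U : Group) (nu : U -> U).
Hypothesis nuM : forall x y, nu (x ** y) = nu x ** nu y.
Hypothesis nuK : forall x, nu (nu x) = x.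
Hypothesis U2 : uniquely_2_divisible U.
Implicit Types c g h r s t x y : U.

Lemma nu1 : nu 1 = 1.
Proof. apply (mulg_injl _ (nu 1)). now rewrite <- nuM, !mulg1. Qed.

Lemma nuV x : nu x^-1 = (nu x)^-1.
Proof. apply invg_unique. now rewrite <- nuM, mulgV, nu1. Qed.

Lemma inverted_sqrt r : nu (r ** r) = (r ** r)^-1 -> nu r = r^-1.
Proof. intro E. apply (sqrt_unique _ _ _ U2). now rewrite <- nuM, E, invMg. Qed.

Lemma generated_inverted A : (forall a b, A a -> A b -> commute a b) ->
  inverted_by U nu A -> inverted_by U nu (generated U A).
Proof.
  intros AA Ainv x Gx.
  apply (generated_min _ A (fun z => generated U A z /\ nu z = z^-1)) in Gx; [tauto | |].
  - split; [|split].
    + split; [apply generated_subgroup | now rewrite nu1, invg1].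
    + intros a b [Ga Na] [Gb Nb]. split; [now apply generated_subgroup|].
      rewrite nuM, Na, Nb, <- invMg. f_equal. now apply (generated_abelian _ A).
    + intros a [Ga Na]. split; [now apply generated_subgroup | now rewrite nuV, Na].
  - intros a Aa. split; [now apply generated_incl | now apply Ainv].
Qed.

(* [y = (y u^-1) u] with [u] the square root of [(nu y)^-1 y]. *)
Lemma fixed_inverted_decomposition (H : U -> Prop) y : is_subgroup U H ->
  (forall y, H y -> H (nu y)) -> (forall r, H (r ** r) -> H r) -> H y ->
  exists c u, nu c = c /\ nu u = u^-1 /\ y = c ** u /\ H c /\ H u.
Proof.
  intros (H1 & HM & HV) Hnu Hroot Hy.
  destruct (U2 ((nu y)^-1 ** y)) as [u [Eu _]].
  assert (Nu : nu u = u^-1).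
  { apply inverted_sqrt. now rewrite Eu, nuM, nuV, nuK, invMg, invgK. }
  assert (Hu : H u) by (apply Hroot; rewrite Eu; auto).
  exists (y ** u^-1), u. repeat split; auto; [|now rewrite mulgKV].
  rewrite nuM, nuV, Nu, invgK. apply (mulg_injr _ u).
  now rewrite mulgKV, <- mulA, Eu, mulKVg.
Qed.

Lemma inverted_defect h : nu ((nu h)^-1 ** h) = ((nu h)^-1 ** h)^-1.
Proof. now rewrite nuM, nuV, nuK, invMg, invgK. Qed.

Lemma commute_inverted_defect t h : nu t = t^-1 -> commute t h ->
  commute t ((nu h)^-1 ** h).
Proof.
  intros Nt Ct. apply commuteM; [apply commuteV | exact Ct].
  assert (E : nu (t ** h) = nu (h ** t)) by now rewrite Ct.
  rewrite !nuM, Nt in E.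
  apply commute_sym. rewrite <- (invgK _ t). apply commuteV. exact (eq_sym E).
Qed.

Lemma fixed_of_defect_root h r : r ** r = (nu h)^-1 ** h -> nu (h ** r^-1) = h ** r^-1.
Proof.
  intro Er.
  assert (Nr : nu r = r^-1) by (apply inverted_sqrt; rewrite Er; apply inverted_defect).
  rewrite nuM, nuV, Nr, invgK.
  replace (nu h) with (h ** (r ** r)^-1) by (rewrite Er; now gnorm).
  now gnorm.
Qed.

Lemma conjugate_of_inverted_product c g s : nu c = c -> nu s = s^-1 ->
  nu (c^-1 ** g ** s) = (c^-1 ** g ** s)^-1 -> s^-1 ** (g^-1 ** c) ** s = c^-1 ** nu g.
Proof.
  intros Nc Ns E. rewrite !nuM, nuV, Nc, Ns in E.
  apply (mulg_injr _ (s^-1)). rewrite E. now gnorm.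
Qed.

Hypothesis fixed_finite : almost_regular U nu.

Section Extension.
Variable D : U -> Prop.

Record admissible (H : U -> Prop) : Prop := {
  adm_subgroup : is_subgroup U H;
  adm_centralizes : forall y, H y -> centralizer U D y;
  adm_nu_stable : forall y, H y -> H (nu y);
  adm_root_closed : forall r, H (r ** r) -> H r;
  adm_infinite : infinite_set U H }.

Definition inverted_extension (w : U) : Prop :=
  centralizer U D w /\ ~ D w /\ nu w = w^-1 /\
  infinite_set U (centralizer U (generated U (fun y => D y \/ y = w))).

Lemma centralizer_admissible : is_subgroup U D -> inverted_by U nu D ->
  infinite_set U (centralizer U D) -> admissible (centralizer U D).
Proof.
  intros (_ & _ & DV) Dinv Cinf. split; auto; [apply centralizer_subgroup | |].
  - intros y Cy a Da.
    assert (E : y ** nu a = nu a ** y) by (apply Cy; rewrite Dinv; auto).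
    apply (f_equal nu) in E. now rewrite !nuM, nuK in E.
  - intros r Cr a Da. apply commute_sym, (commute_sqrt _ _ _ U2), commute_sym, Cr, Da.
Qed.

Lemma admissible_restrict (H : U -> Prop) f : admissible H -> nu f = f ->
  infinite_set U (fun y => H y /\ commute f y) -> admissible (fun y => H y /\ commute f y).
Proof.
  intros [(H1 & HM & HV) Hcent Hnu Hroot _] Nf Hinf. split; auto.
  - split; [|split].
    + split; [exact H1 | apply commute_subgroup].
    + intros x y [Hx Cx] [Hy Cy]. split; [auto | now apply commuteM].
    + intros x [Hx Cx]. split; [auto | now apply commuteV].
  - intros y [Hy _]. now apply Hcent.
  - intros y [Hy Cy]. split; [auto|]. unfold commute. now rewrite <- Nf, <- !nuM, Cy.
  - intros r [Hr Cr]. split; [auto | now apply commute_sqrt].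
Qed.

Lemma admissible_inverted_infinite (H : U -> Prop) : admissible H ->
  infinite_set U (fun u => H u /\ nu u = u^-1).
Proof.
  intros [HH _ Hnu Hroot Hinf] Sfin. apply Hinf.
  apply (finite_subset _ _ (prodset _ (fixed_points U nu) (fun u => H u /\ nu u = u^-1)));
    [|now apply finite_prodset].
  intros y Hy. destruct (fixed_inverted_decomposition H y) as (c & u & Nc & Nu & -> & _ & Hu); auto.
  now exists c, u.
Qed.

Lemma extension_of_commuting (H : U -> Prop) w : admissible H -> H w -> ~ D w ->
  nu w = w^-1 -> infinite_set U (fun t => H t /\ commute t w) -> inverted_extension w.
Proof.
  intros adm Hw Dw Nw Hinf. repeat split; [now apply adm | exact Dw | exact Nw |].
  apply (infinite_superset _ _ _ Hinf). intros t [Ht Ct]. apply centralizer_generated.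
  intros a [Da | ->]; [now apply (adm_centralizes _ adm) | exact Ct].
Qed.

Lemma infinite_inverted_commuting_conjugate (H : U -> Prop) g : admissible H -> H g ->
  exists c r, nu c = c /\ H c /\ H r /\
    infinite_set U (fun t => H t /\ nu t = t^-1 /\ commute t (r^-1 ** (g^-1 ** c) ** r)).
Proof.
  intros adm Hg. pose proof adm as [(H1 & HM & HV) _ Hnu Hroot _].
  destruct fixed_finite as [lF HlF].
  set (P := fun c s => H c /\ nu c = c /\ nu (c^-1 ** g ** s) = (c^-1 ** g ** s)^-1).
  destruct (infinite_pigeonhole _ lF P _ (admissible_inverted_infinite H adm)) as [c [_ Pinf]].
  { intros s [Hs Ns].
    destruct (fixed_inverted_decomposition H (g ** s) (adm_subgroup _ adm) Hnu Hroot (HM _ _ Hg Hs))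
      as (c & u & Nc & Nu & E & Hc & _).
    exists c. split; [now apply HlF|]. repeat split; auto.
    replace (c^-1 ** g ** s) with u; [exact Nu | now rewrite <- mulA, E, mulKg]. }
  destruct (infinite_inhabited _ _ Pinf) as [s0 [[Hs0 Ns0] (Hc & Nc & Ps0)]].
  destruct (U2 s0) as [r [Er _]].
  assert (Nr : nu r = r^-1) by (apply inverted_sqrt; now rewrite Er).
  assert (Hr : H r) by (apply Hroot; now rewrite Er).
  exists c, r. repeat split; auto.
  (* with [h := g^-1 c], all conjugates [s^-1 h s] coincide, so [s s0^-1 = s r^-2]
     commutes with [h], i.e. [r^-1 s r^-1] commutes with [r^-1 h r] *)
  apply (infinite_image _ _ _ (fun s => r^-1 ** s ** r^-1) (fun t => r ** t ** r) Pinf);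
    [|intro; now gnorm].
  intros s [[Hs Ns] (_ & _ & Ps)]. repeat split.
  - apply HM; [apply HM|]; auto.
  - rewrite !nuM, !nuV, Ns, Nr. now gnorm.
  - set (h := g^-1 ** c).
    assert (Eh : h = s0 ** (s^-1 ** h ** s) ** s0^-1).
    { unfold h. rewrite (conjugate_of_inverted_product c g s), <- (conjugate_of_inverted_product c g s0);
        auto. now gnorm. }
    unfold commute. rewrite Eh at 1. rewrite <- Er. now gnorm.
Qed.

Lemma extension_of_infinite w : ~ finite_set U D -> is_abelian U D ->
  centralizer U D w -> ~ D w -> nu w = w^-1 -> inverted_extension w.
Proof.
  intros Dinf Dab Cw Dw Nw. repeat split; auto.
  apply (infinite_superset _ _ _ Dinf). intros d Dd. apply centralizer_generated.
  intros a [Da | ->]; [now apply Dab | apply commute_sym, Cw, Dd].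
Qed.

Hypothesis D_finite : finite_set U D.

Lemma center_finite (H : U -> Prop) : admissible H -> ~ (exists w, inverted_extension w) ->
  finite_set U (center_of U H).
Proof.
  intros adm Next. apply NNPP. intro Zinf.
  destruct (infinite_minus_finite _ _ _ (admissible_inverted_infinite H adm) D_finite)
    as [w [[Hw Nw] Dw]].
  apply Next. exists w. apply (extension_of_commuting H w); auto.
  apply (infinite_superset _ _ _ Zinf). intros z [Hz Cz]. split; [exact Hz | apply Cz, Hw].
Qed.

(* [L] lists the fixed points of [nu] that may fail to centralize [H]. *)
Lemma admissible_descent (H : U -> Prop) (L : list U) : admissible H ->
  (forall f, nu f = f -> ~ In f L -> forall y, H y -> commute y f) ->
  (exists w, inverted_extension w) \/
  (exists f, In f L /\ nu f = f /\ admissible (fun y => H y /\ commute f y)).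
Proof.
  intros adm HL. destruct (classic (exists w, inverted_extension w)) as [Ext | Next];
    [now left | right].
  pose proof adm as [(H1 & HM & HV) Hcent Hnu Hroot Hinf].
  destruct (infinite_minus_finite _ _ _ Hinf
              (finite_prodset _ _ _ fixed_finite (center_finite H adm Next))) as [g [Hg Ng]].
  destruct (infinite_inverted_commuting_conjugate H g adm Hg) as (c & r & Nc & Hc & Hr & Tinf).
  set (h := r^-1 ** (g^-1 ** c) ** r) in Tinf.
  assert (Hh : H h) by (unfold h; repeat (apply HM || apply HV); auto).
  set (e := (nu h)^-1 ** h).
  assert (He : H e) by (unfold e; auto).
  assert (De : D e).
  { apply NNPP. intro De. apply Next. exists e.
    apply (extension_of_commuting H e); auto; [apply inverted_defect|].
    apply (infinite_superset _ _ _ Tinf). intros t (Ht & Nt & Ct).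
    split; [exact Ht | now apply commute_inverted_defect]. }
  destruct (U2 e) as [z [Ez _]].
  assert (Hz : H z) by (apply Hroot; now rewrite Ez).
  assert (z_central : forall y, H y -> commute y z).
  { intros y Hy. apply (commute_sqrt _ _ _ U2). rewrite Ez. exact (Hcent y Hy e De). }
  set (f := h ** z^-1).
  assert (Nf : nu f = f) by now apply fixed_of_defect_root.
  destruct (classic (In f L)) as [Lf | Lf].
  - exists f. split; [exact Lf | split; [exact Nf |]].
    apply (admissible_restrict H f adm Nf), (infinite_superset _ _ _ Tinf).
    intros t (Ht & _ & Ct). split; [exact Ht|].
    apply commute_sym, commuteM, commuteV; [exact Ct | now apply z_central].
  - (* then [h = f z] is central in [H], hence so is [c^-1 g], against the choice of [g] *)
    exfalso. apply Ng. exists c, (c^-1 ** g). split; [exact Nc | split; [split | now rewrite mulKVg]].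
    + apply HM; [apply HV|]; assumption.
    + intros y Hy. apply commute_sym.
      replace (c^-1 ** g) with (g^-1 ** c)^-1 by now gnorm.
      apply commuteV, (commute_conj _ r). change (commute (r^-1 ** y ** r) h).
      replace h with (f ** z) by (unfold f; now gnorm).
      apply commuteM; [apply (HL f Nf Lf) | apply z_central]; repeat (apply HM || apply HV); auto.
Qed.

Lemma admissible_has_extension (H : U -> Prop) (L : list U) : admissible H ->
  (forall f, nu f = f -> ~ In f L -> forall y, H y -> commute y f) ->
  exists w, inverted_extension w.
Proof.
  remember (length L) as n eqn:En. revert H L En.
  induction n as [n IH] using (well_founded_induction Nat.lt_wf_0). intros H L -> adm HL.
  destruct (admissible_descent H L adm HL) as [Ext | (f & Lf & Nf & adm')]; [exact Ext|].
  set (eq_dec := fun x y : U => excluded_middle_informative (x = y)).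
  apply (IH _ (remove_length_lt eq_dec L f Lf) _ (remove eq_dec f L) eq_refl adm').
  intros f' Nf' Lf' y [Hy Cy]. destruct (classic (f' = f)) as [-> | Ne].
  - now apply commute_sym.
  - apply (HL f' Nf'); [|exact Hy]. intro Lf''. now apply Lf', in_in_remove.
Qed.

Lemma finite_has_extension : is_subgroup U D -> inverted_by U nu D ->
  infinite_set U (centralizer U D) -> exists w, inverted_extension w.
Proof.
  intros HD Dinv Cinf. destruct fixed_finite as [lF HlF].
  apply (admissible_has_extension (centralizer U D) lF); [now apply centralizer_admissible|].
  intros f Nf Lf. exfalso. exact (Lf (HlF f Nf)).
Qed.

End Extension.

Definition inverted_abelian (A : U -> Prop) : Prop :=
  is_subgroup U A /\ is_abelian U A /\ inverted_by U nu A.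

Lemma inverted_abelian_trivial : inverted_abelian (fun y => y = 1).
Proof.
  repeat split.
  - intros x y -> ->. apply mulg1.
  - intros x ->. apply invg1.
  - intros x y -> ->. reflexivity.
  - intros x ->. now rewrite nu1, invg1.
Qed.

Lemma inverted_abelian_adjoin D w : inverted_abelian D -> inverted_extension D w ->
  inverted_abelian (generated U (fun y => D y \/ y = w)).
Proof.
  intros (HD & Dab & Dinv) (Cw & _ & Nw & _).
  assert (Ecomm : forall a b, D a \/ a = w -> D b \/ b = w -> commute a b).
  { intros a b [Da | ->] [Db | ->]; [now apply Dab | | apply Cw, Db | reflexivity].
    apply commute_sym, Cw, Da. }
  split; [apply generated_subgroup | split; [now apply generated_abelian|]].
  apply generated_inverted; [exact Ecomm|]. intros x [Dx | ->]; auto.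
Qed.

Lemma inverted_abelian_union (A : nat -> U -> Prop) : (forall n, inverted_abelian (A n)) ->
  (forall n y, A n y -> A (S n) y) -> inverted_abelian (fun y => exists n, A n y).
Proof.
  intros Aab AS.
  assert (up : forall n m y, n <= m -> A n y -> A m y) by exact (chain_mono _ A AS).
  repeat split.
  - exists 0. apply (Aab 0).
  - intros x y [i Ax] [j Ay]. exists (Nat.max i j).
    apply (Aab (Nat.max i j)); [apply (up i) | apply (up j)]; lia || assumption.
  - intros x [i Ax]. exists i. now apply (Aab i).
  - intros x y [i Ax] [j Ay].
    apply (Aab (Nat.max i j)); [apply (up i) | apply (up j)]; lia || assumption.
  - intros x [i Ax]. now apply (Aab i).
Qed.

Definition extension_point (D : U -> Prop) : U :=
  epsilon (inhabits (one U)) (inverted_extension D).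

Fixpoint extension_chain (n : nat) : U -> Prop :=
  match n with
  | 0 => fun y => y = 1
  | S m => generated U (fun y => extension_chain m y \/ y = extension_point (extension_chain m))
  end.

Lemma infinite_inverted_abelian_subgroup : infinite_group U ->
  exists A, is_subgroup U A /\ infinite_set U A /\ is_abelian U A /\ inverted_by U nu A.
Proof.
  intros Uinf. apply NNPP. intro Nex.
  assert (all_finite : forall A, inverted_abelian A -> finite_set U A).
  { intros A (HA & Aab & Ainv). apply NNPP. intro Ainf. apply Nex. now exists A. }
  assert (extends : forall n, inverted_abelian (extension_chain n) ->
            infinite_set U (centralizer U (extension_chain n)) ->
            inverted_extension (extension_chain n) (extension_point (extension_chain n))).
  { intros n Hn Cinf. unfold extension_point. apply epsilon_spec, finite_has_extension; auto; apply Hn. }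
  assert (chain_ok : forall n, inverted_abelian (extension_chain n) /\
            infinite_set U (centralizer U (extension_chain n))).
  { induction n as [|n [Hn Cinf]].
    - split; [exact inverted_abelian_trivial|].
      apply (infinite_superset _ _ _ Uinf). intros y _ a ->. now rewrite mulg1, mul1g.
    - pose proof (extends n Hn Cinf) as Ext. split; [now apply inverted_abelian_adjoin | apply Ext]. }
  assert (chain_up : forall n y, extension_chain n y -> extension_chain (S n) y)
    by (intros n y Hy; apply generated_incl; now left).
  apply (strictly_increasing_union_infinite _ _ (fun n => extension_point (extension_chain n)) chain_up).
  - intro n. split; [apply generated_incl; now right | apply extends; apply chain_ok].
  - apply all_finite, inverted_abelian_union; [apply chain_ok | exact chain_up].
Qed.

End Involution.

Theorem lemma3p1 (U : Group) (nu : U -> U) (D : U -> Prop) :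
  infinite_group U ->
  uniquely_2_divisible U ->
  is_automorphism U nu ->
  involutory U nu ->
  almost_regular U nu ->
  is_subgroup U D ->
  is_abelian U D ->
  inverted_by U nu D ->
  infinite_set U (centralizer U D) ->
  (exists x, nu x = inv U x /\ centralizer U D x /\ ~ D x) ->
  (exists w, centralizer U D w /\ ~ D w /\ nu w = inv U w /\
     infinite_set U (centralizer U (generated U (fun y => D y \/ y = w))))
  /\
  (exists A : U -> Prop, is_subgroup U A /\ infinite_set U A /\
     is_abelian U A /\ inverted_by U nu A).
Proof.
  intros Uinf U2 [nuM _] [_ nuK] nu_ar HD Dab Dinv Cinf [x (Nx & Cx & Dx)].
  split; [|exact (infinite_inverted_abelian_subgroup U nu nuM nuK U2 nu_ar Uinf)].
  destruct (classic (finite_set U D)) as [Dfin | Dinf].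
  - exact (finite_has_extension U nu nuM nuK U2 nu_ar D Dfin HD Dinv Cinf).
  - exists x. exact (extension_of_infinite U nu D x Dinf Dab Cx Dx Nx).
Qed.
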